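(* Let $X$ be an infinite-dimensional Banach space over $\mathbb{R}$ with a Schauder basis $(a_n)_{n\in\mathbb{N}}$, and let $A=\{a_n:n\in\mathbb{N}\}$. Then $A$ is a topologically independent subset of the additive topological group of $X$, but $\langle A\rangle$ is not the Tychonoff direct sum $\bigoplus_{a\in A}\langle a\rangle$.
   Context: A subset $A$ of an abelian topological group $G$ (neutral element $0$) is topologically independent if $0\notin A$ and for every neighborhood $W$ of $0$ there is a neighborhood $U$ of $0$ such that for every finite $F\subseteq A$ and every family of integers $\{z_a: a\in F\}$, the condition $\sum_{a\in F}z_a a\in U$ implies $z_a a\in W$ for all $a\in F$. $\langle A\rangle$ is the additive subgroup generated by $A$ with the subspace topology. The Tychonoff direct sum $\bigoplus_{a\in A}\langle a\rangle$ is the direct sum of the groups $\langle a\rangle$ (subspace topology) with the topology induced from the product $\prod_{a\in A}\langle a\rangle$; ''$\langle A\rangle$ is the Tychonoff direct sum'' means the map $(g_a)\mapsto\sum_a g_a$ is an isomorphism of topological groups from $\bigoplus_{a\in A}\langle a\rangle$ onto $\langle A\rangle$. *)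

From HB Require Import structures.
From mathcomp Require Import all_boot all_order all_algebra.
From mathcomp Require Import all_classical all_reals all_analysis.
Set Implicit Arguments. Unset Strict Implicit. Unset Printing Implicit Defensive.
Import Order.TTheory GRing.Theory Num.Theory.
Import numFieldNormedType.Exports.
Local Open Scope classical_set_scope.
Local Open Scope ring_scope.

Section Defs.
Variable R : realType.

Definition schauder_basis (X : normedModType R) (a : nat -> X) : Prop :=
  forall x : X, exists! c : nat -> R,
    (fun n => \sum_(i < n) c i *: a i) @ \oo --> x.

Definition infinite_dimensional (X : normedModType R) : Prop :=
  forall (n : nat) (v : 'I_n -> X), exists x : X,
    forall c : 'I_n -> R, x <> \sum_(i < n) c i *: v i.
End Defs.

Section TopGroupDefs.
Variable G : topologicalZmodType.

(** Topological independence of A (paper's definition). Finite subsets F of A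
    are given by duplicate-free lists. *)
Definition top_independent (A : set G) : Prop :=
  ~ A 0 /\
  forall W : set G, nbhs 0 W -> exists U : set G, nbhs 0 U /\
    forall (F : seq G) (z : G -> int), uniq F -> (forall a, a \in F -> A a) ->
      U (\sum_(a <- F) a *~ z a) -> forall a, a \in F -> W (a *~ z a).

Definition gen_subgroup (A : set G) : set G :=
  [set x | exists (F : seq G) (z : G -> int), (forall a, a \in F -> A a) /\
           x = \sum_(a <- F) a *~ z a].

(** Carrier of the direct sum (+)_{a in A} <a>, realised inside the product
    prod_{x : G} G (pointwise/product topology): finitely supported families g
    with g a in <a> for a in A and g x = 0 outside A. *)
Definition dsum_carrier (A : set G) : set {ptws G -> G} :=
  [set g | finite_set [set x | g x != 0] /\ (forall x, ~ A x -> g x = 0) /\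
           forall a, A a -> exists k : int, g a = a *~ k].

Definition dsum_map (g : {ptws G -> G}) : G := \sum_(x \in [set: G]) g x.

(** <A> is the Tychonoff direct sum: the summation map is an isomorphism of
    topological groups from the direct sum (subspace of the product topology)
    onto <A> (subspace topology).  The map is always a group homomorphism, so
    this means: bijection onto <A>, continuous, with continuous inverse. *)
Definition is_tychonoff_direct_sum (A : set G) : Prop :=
  [/\ set_inj (dsum_carrier A) dsum_map,
      dsum_map @` dsum_carrier A = gen_subgroup A,
      {within dsum_carrier A, continuous dsum_map} &
      exists inv : G -> {ptws G -> G},
        (forall x, gen_subgroup A x ->
           dsum_carrier A (inv x) /\ dsum_map (inv x) = x) /\
        {within gen_subgroup A, continuous inv}].
End TopGroupDefs.

From HB Require Import structures.
From mathcomp Require Import all_boot all_order all_algebra.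
From mathcomp Require Import all_classical all_reals all_analysis.
From mathcomp Require Import ring lra.
Set Implicit Arguments. Unset Strict Implicit. Unset Printing Implicit Defensive.
Import Order.TTheory GRing.Theory Num.Theory.
Import numFieldNormedType.Exports.
Local Open Scope classical_set_scope.
Local Open Scope ring_scope.

(* The partial sums of a Schauder basis are uniformly bounded.  By Baire's
   theorem the closure of some level set [psum_level k] contains a ball, so
   every y is approximated by vectors whose partial sums are at most M |y|.
   Subtracting such approximants along a geometric series and passing to the
   limit coordinatewise gives |psum n y| <= 2 M |y|, hence
   |c_n(x) a_n| <= 4 M |x|: the terms of a small integer combination of basis
   vectors are small, which is topological independence.
   For the second half, pick integers m_k with |m_k a_k| > 1: the families with
   the single entry m_k a_k at a_k tend to 0 in the product topology, while
   their sums stay outside the unit ball. *)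

Section DirectSum.
Variable G : topologicalZmodType.

Definition single (b v : G) : {ptws G -> G} := fun x => if x == b then v else 0.

Lemma dsum_carrier0 (A : set G) : dsum_carrier A (fun=> 0).
Proof.
split; first by apply: (sub_finite_set _ (finite_set0 _)) => x /=; rewrite eqxx.
by split=> // x _; exists 0; rewrite mulr0z.
Qed.

Lemma dsum_map0 : dsum_map ((fun=> 0) : {ptws G -> G}) = 0.
Proof. exact: fsbig1. Qed.

Lemma dsum_carrier_single (A : set G) (b : G) (k : int) :
  A b -> dsum_carrier A (single b (b *~ k)).
Proof.
rewrite /single => Ab; split.
  apply: (sub_finite_set _ (finite_set1 b)) => x /=.
  by case: (eqVneq x b) => [->|_]; rewrite ?eqxx.
split=> [x Ax|x _]; first by case: eqVneq => // xb; rewrite xb in Ax.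
by case: eqVneq => [->|_]; [exists k | exists 0; rewrite mulr0z].
Qed.

Lemma dsum_map_single (b v : G) : dsum_map (single b v) = v.
Proof.
rewrite /dsum_map -(@fsbig_widen _ _ _ _ [set b]) //.
  by rewrite fsbig_set1 /single eqxx.
by move=> x [_ /= xb]; rewrite /single; case: eqVneq.
Qed.

Lemma tychonoff_dsum_map_cvg (A : set G) (g : nat -> {ptws G -> G})
    (g0 : {ptws G -> G}) :
  is_tychonoff_direct_sum A -> (forall k, dsum_carrier A (g k)) ->
  dsum_carrier A g0 -> g @ \oo --> g0 ->
  (fun k => dsum_map (g k)) @ \oo --> dsum_map g0.
Proof.
case=> _ _ cont _ Ag Ag0 gg0.
have gg0_sub : (g : nat -> subspace (dsum_carrier A)) @ \oo --> (g0 : subspace _).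
  move=> Q Q0; have : nbhs_subspace (g0 : subspace (dsum_carrier A)) Q := Q0.
  rewrite -(nbhs_subspace_in Ag0) => /gg0 [N _ gQ].
  by exists N => // n /= Nn; apply: gQ.
exact: cvg_comp gg0_sub (cont g0).
Qed.
End DirectSum.

Lemma single_cvg0 (R : numDomainType) (V : normedModType R) (b v : nat -> V) :
  injective b ->
  (fun k => single (b k) (v k)) @ \oo --> ((fun=> 0) : {ptws V -> V}).
Proof.
move=> b_inj; apply/pointwise_cvgP => x.
change ((fun k => single (b k) (v k) x) @ \oo --> (0 : V)).
apply: cvg_near_cst; rewrite /single.
have [[j ->]|xNb] := pselect (exists j, x = b j).
  near=> k; rewrite (inj_eq b_inj) ifF //; apply: ltn_eqF.
  by near: k; exists j.+1.
by near=> k; case: eqVneq => // xbk; case: xNb; exists k.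
Unshelve. all: by end_near.
Qed.

Lemma exists_mulrn_norm_gt1 (R : realType) (V : normedModType R) (x : V) :
  x != 0 -> exists m : nat, 1 < `|x *+ m|.
Proof.
rewrite -normr_gt0 => x0; exists (Num.truncn `|x|^-1).+1.
by rewrite normrMn -mulr_natl -ltr_pdivrMr // div1r truncnS_gt.
Qed.

Lemma range_not_tychonoff (R : realType) (V : normedModType R) (a : nat -> V) :
  injective a -> (forall n, a n != 0) -> ~ is_tychonoff_direct_sum (range a).
Proof.
move=> a_inj a_neq0 tych.
have /choice [m am_gt1] n := exists_mulrn_norm_gt1 (a_neq0 n).
pose g k := single (a k) (a k *~ (m k)%:Z).
have : (fun k => dsum_map (g k)) @ \oo --> dsum_map ((fun=> 0) : {ptws V -> V}).
  apply: tychonoff_dsum_map_cvg tych _ (dsum_carrier0 _) (single_cvg0 _ a_inj).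
  by move=> k; apply: dsum_carrier_single; exists k.
rewrite dsum_map0 => /cvgr0_norm_lt /(_ _ ltr01) [N _ /(_ N (leqnn N))] /=.
by rewrite dsum_map_single => /(lt_trans (am_gt1 N)); rewrite ltxx.
Qed.

Lemma subrACA (V : zmodType) (x y z w : V) : (x - y) - (z - w) = (x - z) - (y - w).
Proof. by rewrite !opprB addrACA [RHS]addrACA (addrC (- y)). Qed.

Lemma cvg_of_uniform_approx (R : realFieldType) (V : normedModType R)
    (S t : nat -> V) (u : nat -> nat -> V) (y : V) (d : nat -> R) :
  (forall J, u J @ \oo --> t J) -> t @ \oo --> y -> d @ \oo --> 0 ->
  (forall J n, `|S n - u J n| <= d J) -> S @ \oo --> y.
Proof.
move=> ut ty d0 Sud; apply/cvgrPdist_lt => e e0.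
have e3 : 0 < e / 3 by rewrite divr_gt0.
have /cvgr0_norm_lt /(_ _ e3) [N1 _ dN1] := d0.
have /cvgrPdist_lt /(_ _ e3) [N2 _ tN2] := ty.
pose J := maxn N1 N2.
have /cvgrPdist_lt /(_ _ e3) [N3 _ uN3] := ut J.
exists N3 => // n /= Nn.
have -> : y - S n = (y - t J) + (t J - u J n) + (u J n - S n).
  by rewrite !addrA !subrK.
have ytJ : `|y - t J| < e / 3 by apply: tN2; rewrite /= leq_maxr.
have tuJ : `|t J - u J n| < e / 3 by exact: uN3.
have uSJ : `|u J n - S n| <= d J by rewrite distrC.
have dJ : d J < e / 3.
  by have := dN1 J (leq_maxl _ _); rewrite ger0_norm // (le_trans _ uSJ).
apply: le_lt_trans (ler_normD _ _) _.
have := ler_normD (y - t J) (t J - u J n); lra.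
Qed.

Section SchauderBasis.
Variables (R : realType) (X : normedModType R) (a : nat -> X).
Hypothesis basis_a : schauder_basis a.

Definition coord (x : X) : nat -> R := proj1_sig (cid (basis_a x)).

Definition psum (n : nat) (x : X) : X := \sum_(i < n) coord x i *: a i.

Lemma psum_cvg (x : X) : psum^~ x @ \oo --> x.
Proof. by rewrite /psum /coord; case: cid => c []. Qed.

Lemma coord_unique (x : X) (c : nat -> R) :
  (fun n => \sum_(i < n) c i *: a i) @ \oo --> x -> coord x = c.
Proof. by rewrite /coord; case: cid => c0 [_ uniq_c0] /= /uniq_c0. Qed.

Lemma coordD (x y : X) : coord (x + y) = fun i => coord x i + coord y i.
Proof.
apply: coord_unique.
have -> : (fun n => \sum_(i < n) (coord x i + coord y i) *: a i) =
    fun n => psum n x + psum n y.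
  by apply/funext => n; rewrite /psum -big_split; apply: eq_bigr => i _; rewrite scalerDl.
by apply: cvgD; exact: psum_cvg.
Qed.

Lemma coordZ (s : R) (x : X) : coord (s *: x) = fun i => s * coord x i.
Proof.
apply: coord_unique.
have -> : (fun n => \sum_(i < n) (s * coord x i) *: a i) =
    fun n => s *: psum n x.
  by apply/funext => n; rewrite /psum scaler_sumr; apply: eq_bigr => i _; rewrite scalerA.
by apply: cvgZl_tmp; exact: psum_cvg.
Qed.

Lemma coord0 : coord 0 = fun=> 0.
Proof. by rewrite -(scale0r (0 : X)) coordZ; under eq_fun do rewrite mul0r. Qed.

Lemma coord_basis (j : nat) : coord (a j) = fun i => (i == j)%:R.
Proof.
apply: coord_unique; apply: cvg_near_cst; near=> n.
have jn : (j < n)%N by near: n; exists j.+1.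
rewrite (bigD1 (Ordinal jn)) //= eqxx scale1r big1 ?addr0 // => i.
by rewrite -val_eqE /= => /negbTE ->; rewrite scale0r.
Unshelve. all: by end_near.
Qed.

Lemma basis_neq0 (j : nat) : a j != 0.
Proof.
apply/eqP => aj0; have := congr1 (fun c => c j) (coord_basis j).
by rewrite aj0 coord0 /= eqxx => /eqP; rewrite eq_sym oner_eq0.
Qed.

Lemma basis_inj : injective a.
Proof.
move=> i j aij; have := congr1 (fun c => c i) (coord_basis j).
by rewrite -aij coord_basis /= eqxx; case: eqVneq => // _ /eqP; rewrite oner_eq0.
Qed.

Lemma psumD (n : nat) (x y : X) : psum n (x + y) = psum n x + psum n y.
Proof. by rewrite /psum coordD -big_split; apply: eq_bigr => i _; rewrite scalerDl. Qed.

Lemma psumZ (n : nat) (s : R) (x : X) : psum n (s *: x) = s *: psum n x.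
Proof. by rewrite /psum coordZ scaler_sumr; apply: eq_bigr => i _; rewrite scalerA. Qed.

Lemma psumB (n : nat) (x y : X) : psum n (x - y) = psum n x - psum n y.
Proof. by rewrite psumD -scaleN1r psumZ scaleN1r. Qed.

Lemma coordB (x y : X) (i : nat) : coord (x - y) i = coord x i - coord y i.
Proof. by rewrite coordD -scaleN1r coordZ mulN1r. Qed.

Lemma psum0 (n : nat) : psum n 0 = 0.
Proof. by rewrite /psum coord0 big1 // => i _; rewrite scale0r. Qed.

Lemma psumS (n : nat) (x : X) : psum n.+1 x - psum n x = coord x n *: a n.
Proof. by rewrite /psum big_ord_recr /= addrAC subrr add0r. Qed.

Lemma cvg_coord_of_psum_cauchy (t : nat -> X) (d : nat -> R) :
  d @ \oo --> 0 ->
  (forall J J' n, (J <= J')%N -> `|psum n (t J') - psum n (t J)| <= d J) ->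
  forall i, cvgn (fun J => coord (t J) i).
Proof.
move=> d0 psum_t i.
have ai0 : 0 < `|a i| by rewrite normr_gt0 basis_neq0.
have coord_t J J' : (J <= J')%N ->
    `|coord (t J') i - coord (t J) i| * `|a i| <= 2 * d J.
  move=> JJ'; rewrite -normrZ -coordB -psumS !psumB.
  apply: le_trans (ler_normB _ _) _.
  have := psum_t J J' i JJ'; have := psum_t J J' i.+1 JJ'; lra.
apply/cauchy_cvgP/cauchy_exP => e e0.
have /cvgr0_norm_lt /(_ (e * `|a i| / 2)) [|N _ dN] := d0.
  by rewrite divr_gt0 // mulr_gt0.
exists (coord (t N) i), N => // m /= Nm.
rewrite -ball_normE /ball_ /= distrC -(ltr_pM2r ai0).
apply: le_lt_trans (coord_t N m Nm) _.
have := dN N (leqnn N); rewrite /= ltr_pdivlMr // => dNe.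
by rewrite mulrC; apply: le_lt_trans dNe; rewrite ler_pM2r // ler_norm.
Qed.

Lemma psum_limit_bound (t : nat -> X) (y : X) (d : nat -> R) :
  t @ \oo --> y -> d @ \oo --> 0 ->
  (forall J J' n, (J <= J')%N -> `|psum n (t J') - psum n (t J)| <= d J) ->
  forall n J, `|psum n y - psum n (t J)| <= d J.
Proof.
move=> ty d0 psum_t.
pose c i := lim (coord (t J) i @[J --> \oo]).
pose S n := \sum_(i < n) c i *: a i.
have psum_t_cvg n : psum n (t J) @[J --> \oo] --> S n.
  apply: cvg_big => [|i _]; first by move=> z; exact: add_continuous.
  by apply: cvgZr_tmp; exact: (cvg_coord_of_psum_cauchy d0 psum_t).
have S_psum n J : `|S n - psum n (t J)| <= d J.
  have : `|psum n (t J') - psum n (t J)| @[J' --> \oo] --> `|S n - psum n (t J)|.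
    by apply: cvg_norm; apply: cvgB => //; exact: cvg_cst.
  apply: (closed_cvg [set x : R | x <= d J] (@closed_le _ (d J))).
  by near=> J'; apply: psum_t; near: J'; exists J.
have /coord_unique yc : S @ \oo --> y.
  have := @cvg_of_uniform_approx _ _ S t (fun J n => psum n (t J)) y d.
  by apply=> // J; exact: psum_cvg.
by move=> n J; rewrite /psum yc; exact: S_psum.
Unshelve. all: by end_near.
Qed.

Definition approximately_psum_bounded (M : R) : Prop :=
  forall (y : X) (eps : R), 0 < eps ->
    exists e, `|y - e| < eps /\ forall n, `|psum n e| <= M * `|y|.

Lemma approx_remainders (M : R) (y : X) :
  0 <= M -> approximately_psum_bounded M -> y != 0 ->
  exists r : nat -> X, [/\ r 0%N = y, forall j, `|r j| <= 2^-1 ^+ j * `|y| &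
    forall j n, `|psum n (r j - r j.+1)| <= M * (2^-1 ^+ j * `|y|)].
Proof.
move=> M0 apx y0.
have /choice [e e_apx] (p : X * nat) : exists e,
    `|p.1 - e| < 2^-1 ^+ p.2.+1 * `|y| /\ forall n, `|psum n e| <= M * `|p.1|.
  by apply: apx; rewrite mulr_gt0 ?exprn_gt0 ?normr_gt0.
pose fix r j := if j is j'.+1 then r j' - e (r j', j') else y.
have r_small j : `|r j| <= 2^-1 ^+ j * `|y|.
  by case: j => [|j]; [rewrite expr0 mul1r | exact/ltW/(e_apx (r j, j)).1].
exists r; split=> // j n; rewrite /= opprB addrC subrK.
apply: le_trans ((e_apx (r j, j)).2 n) _.
by rewrite ler_wpM2l ?r_small.
Qed.

Lemma psum_bound_of_approx (M : R) : 0 <= M -> approximately_psum_bounded M ->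
  forall (y : X) n, `|psum n y| <= 2 * M * `|y|.
Proof.
move=> M0 apx y n.
have [->|y0] := eqVneq y 0; first by rewrite psum0 normr0 mulr0.
have [r [r0 r_small r_step]] := approx_remainders M0 apx y0.
pose q : R := 2^-1.
have q_ge0 : 0 <= q by rewrite invr_ge0.
pose d K := 2 * M * `|y| * q ^+ K.
have r_tele K k m : `|psum m (r K - r (K + k)%N)| <= d K * (1 - q ^+ k).
  elim: k => [|k IH]; first by rewrite addn0 subrr psum0 normr0 expr0 subrr mulr0.
  rewrite -(subrKA (r (K + k)%N)) psumD addnS.
  apply: le_trans (ler_normD _ _) (le_trans (lerD IH (r_step _ m)) _).
  suff -> : d K * (1 - q ^+ k) + M * (q ^+ (K + k) * `|y|) = d K * (1 - q ^+ k.+1).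
    by [].
  by rewrite /d exprD exprS /q; field.
have r_cauchy K K' m : (K <= K')%N -> `|psum m (r K - r K')| <= d K.
  move=> KK'; rewrite -(subnKC KK'); apply: le_trans (r_tele K (K' - K)%N m) _.
  by rewrite ler_piMr ?gerBl ?exprn_ge0 // /d !mulr_ge0 ?exprn_ge0.
have q_cvg : GRing.exp q @ \oo --> 0.
  by apply: cvg_expr; rewrite ger0_norm // invf_lt1 // ltr1n.
have d_cvg : d @ \oo --> 0.
  by rewrite -(mulr0 (2 * M * `|y|)); apply: cvgMl_tmp; exact: q_cvg.
have t_cvg : y - r J @[J --> \oo] --> y.
  rewrite -[X in _ --> X]subr0; apply: cvgB; first exact: cvg_cst.
  have qy_cvg : q ^+ j * `|y| @[j --> \oo] --> 0.
    by rewrite -(mul0r `|y|); apply: cvgMr_tmp; exact: q_cvg.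
  apply: norm_cvg0; apply: (squeeze_cvgr _ (cvg_cst 0) qy_cvg).
  by near=> j; rewrite normr_ge0 r_small.
have := psum_limit_bound t_cvg d_cvg _ n 0%N.
rewrite r0 subrr psum0 subr0 /d expr0 mulr1; apply=> K K' m KK'.
by rewrite -psumB opprB addrC addrA subrK; exact: r_cauchy.
Unshelve. all: by end_near.
Qed.

Lemma coord_zsum (F : seq X) (z : X -> int) (i : nat) :
  coord (\sum_(b <- F) b *~ z b) i = \sum_(b <- F) (z b)%:~R * coord b i.
Proof.
elim: F => [|b F IH]; first by rewrite !big_nil coord0.
by rewrite !big_cons coordD -scaler_int coordZ IH.
Qed.

Lemma coord_zsum_basis (F : seq X) (z : X -> int) (i : nat) :
  uniq F -> (forall b, b \in F -> range a b) -> a i \in F ->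
  coord (\sum_(b <- F) b *~ z b) i = (z (a i))%:~R.
Proof.
move=> uF Fa aiF; rewrite coord_zsum (bigD1_seq (a i)) //= coord_basis eqxx mulr1.
rewrite big1_seq ?addr0 // => b /andP [bNai /Fa [j _ aj_b]].
by rewrite -aj_b coord_basis (inj_eq basis_inj) in bNai *; rewrite eq_sym (negbTE bNai) mulr0.
Qed.

Lemma top_independent_of_coord_bound (C : R) : 0 <= C ->
  (forall x n, `|coord x n *: a n| <= C * `|x|) -> top_independent (range a).
Proof.
move=> C0 coord_le; split; first by case=> j _ /eqP; rewrite (negbTE (basis_neq0 j)).
move=> W /nbhs_ballP [eps eps0 epsW].
have epsC0 : 0 < eps / (C + 1) by rewrite divr_gt0 // ltr_wpDl.
exists (ball 0 (eps / (C + 1))); split; first exact: nbhsx_ballx.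
move=> F z uF Fa; rewrite -ball_normE /= sub0r normrN => F_small b bF.
have [i _ ai_b] := Fa b bF.
apply: epsW; rewrite -ball_normE /= sub0r normrN.
have -> : b *~ z b = coord (\sum_(c <- F) c *~ z c) i *: a i.
  by rewrite coord_zsum_basis ?ai_b // scaler_int.
apply: le_lt_trans (coord_le _ i) (le_lt_trans (ler_wpM2l C0 (ltW F_small)) _).
by rewrite mulrA ltr_pdivrMr ?ltr_wpDl // mulrDr mulr1 (mulrC eps) ltrDl.
Qed.

Definition psum_level (k : nat) : set X := [set x | forall n, `|psum n x| <= k%:R].

Lemma psum_level_cover (x : X) : exists k, psum_level k x.
Proof.
have /cvg_seq_bounded/ex_bound [|M /= psumM] := cvgP _ (psum_cvg (x := x)).
  exact: (@globally_properfilter _ _ 0%N).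
exists (Num.truncn M).+1 => n; apply: le_trans (ltW (truncnS_gt M)).
exact: psumM.
Qed.

Lemma approximately_psum_bounded_of_ball (k : nat) (x0 : X) (r : R) :
  0 < r -> ball x0 r `<=` closure (psum_level k) ->
  exists2 M, 0 <= M & approximately_psum_bounded M.
Proof.
move=> r0 ball_level.
exists (4 * k%:R / r) => [|y]; first by rewrite divr_ge0 ?mulr_ge0 // ltW.
move=> eps eps0; have [->|y0] := eqVneq y 0.
  by exists 0; rewrite subr0 normr0 mulr0; split=> // n; rewrite psum0 normr0.
have y_gt0 : 0 < `|y| by rewrite normr_gt0.
pose s := r / (2 * `|y|).
have s0 : 0 < s by rewrite divr_gt0 // mulr_gt0.
have seps0 : 0 < s * eps / 2 by rewrite divr_gt0 // mulr_gt0.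
have x0sy : ball x0 r (x0 + s *: y).
  rewrite -ball_normE /=; have -> : `|x0 - (x0 + s *: y)| = r / 2.
    by rewrite opprD addrA subrr sub0r normrN normrZ gtr0_norm // /s; field; rewrite gt_eqF.
  lra.
have [e1 [e1_level]] := ball_level _ x0sy _ (nbhsx_ballx _ _ seps0).
have [e2 [e2_level]] := ball_level _ (ballxx _ r0) _ (nbhsx_ballx _ _ seps0).
rewrite -!ball_normE /= => e2_near e1_near.
exists (s^-1 *: (e1 - e2)); split.
  have -> : y - s^-1 *: (e1 - e2) = s^-1 *: ((x0 + s *: y - e1) - (x0 - e2)).
    rewrite subrACA (addrC x0) addrK [RHS]scalerBr scalerA mulVf ?gt_eqF //.
    by rewrite scale1r.
  rewrite normrZ gtr0_norm ?invr_gt0 // ltr_pdivrMl //.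
  by apply: le_lt_trans (ler_normB _ _) _; rewrite [s * eps]splitr ltrD.
move=> n; rewrite psumZ psumB normrZ gtr0_norm ?invr_gt0 //.
apply: le_trans (ler_wpM2l _ (le_trans (ler_normB _ _) (lerD (e1_level n) (e2_level n)))) _.
  by rewrite invr_ge0 ltW.
suff -> : s^-1 * (k%:R + k%:R) = 4 * k%:R / r * `|y| by [].
by rewrite /s; field; rewrite !gt_eqF.
Qed.

End SchauderBasis.

Section CompleteSchauderBasis.
Variables (R : realType) (X : completeNormedModType R) (a : nat -> X).
Hypothesis basis_a : schauder_basis a.

Lemma psum_level_closure_ball :
  exists (k : nat) (x0 : X) (r : R), 0 < r /\ ball x0 r `<=` closure (psum_level basis_a k).
Proof.
pose F k := ~` closure (psum_level basis_a k).
have [[k /existsNP [U /not_implyP [[x0 Ux0] /not_implyP [oU UF]]]]|] :=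
  pselect (exists k, ~ dense (F k)); last first.
  move=> /forallNP F_dense.
  have F_open_dense k : open (F k) /\ dense (F k).
    by split; [exact/closed_openC/closed_closure | exact: contrapT].
  have [x [_ Fx]] := Baire F_open_dense (ex_intro setT 0 Logic.I) openT.
  have [k xk] := psum_level_cover basis_a x.
  by case: (Fx k Logic.I); exact: subset_closure.
have /nbhs_ballP [r r0 rU] : nbhs x0 U by exact: open_nbhs_nbhs.
exists k, x0, r; split=> // z /rU Uz.
by apply: contrapT => Fz; apply: UF; exists z.
Qed.

Lemma coord_bounded :
  exists2 C, 0 <= C & forall x n, `|coord basis_a x n *: a n| <= C * `|x|.
Proof.
have [k [x0 [r [r0 ball_level]]]] := psum_level_closure_ball.
have [M M0 apx] := approximately_psum_bounded_of_ball r0 ball_level.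
exists (4 * M) => [|x n]; first by rewrite mulr_ge0.
rewrite -psumS; apply: le_trans (ler_normB _ _) _.
have := psum_bound_of_approx M0 apx x n.+1; have := psum_bound_of_approx M0 apx x n.
have : 0 <= M * `|x| by rewrite mulr_ge0.
lra.
Qed.

End CompleteSchauderBasis.

Theorem mainTheorem8 (R : realType) (X : completeNormedModType R)
    (a : nat -> X) :
  infinite_dimensional X -> schauder_basis a ->
  top_independent (range a) /\ ~ is_tychonoff_direct_sum (range a).
Proof.
move=> _ basis_a; split.
  have [C C0 coord_le] := coord_bounded basis_a.
  exact: top_independent_of_coord_bound C0 coord_le.
exact: range_not_tychonoff (basis_inj basis_a) (basis_neq0 basis_a).
Qed.
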